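(* Let $\mathbb F$ be a field, fix a partition of $\{1,\dots,m\}$ into consecutive (possibly empty) intervals $I_1,\dots,I_k$ (in increasing order), and let $D$ be an $m\times m$ differential matrix over $\mathbb F$ that is block-superdiagonal with respect to this partition. Then there exist an $m\times m$ almost-Jordan differential matrix $\underline D$ that is block-superdiagonal with respect to the same partition, and an $m\times m$ triangular matrix $B$ that is block-diagonal with respect to the same partition, such that $D=B\,\underline D\,B^{-1}$.
   Context: A differential matrix is a square matrix $D$ with $D^2=0$. A differential matrix is Jordan if it is block-diagonal with every diagonal block equal to either the $1\times 1$ zero matrix $[0]$ or the $2\times 2$ matrix $\begin{bmatrix}0&1\\0&0\end{bmatrix}$. A differential matrix $\underline D$ is almost-Jordan if there is a permutation matrix $P$ such that $P^{-1}\underline D P$ is Jordan. A square matrix is triangular if it is upper-triangular and invertible. Given a partition of the index set $\{1,\dots,m\}$ into consecutive intervals $I_1,\dots,I_k$, an $m\times m$ matrix $M$ is block-diagonal if $M_{ab}=0$ whenever $a\in I_i$, $b\in I_j$ with $i\ne j$, and block-superdiagonal if $M_{ab}=0$ whenever $a\in I_i$, $b\in I_j$ with $j\neq i+1$. *)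

From HB Require Import structures.
From mathcomp Require Import all_boot all_order all_algebra all_fingroup.
Set Implicit Arguments. Unset Strict Implicit. Unset Printing Implicit Defensive.
Import Order.TTheory GRing.Theory Num.Theory.
Local Open Scope ring_scope.

Section Defs.
Variable F : fieldType.

Definition differential (m : nat) (D : 'M[F]_m) : Prop := D *m D = 0.

(* Jordan matrix with diagonal block sizes s (each 1 or 2): the 1x1 block is [0],
   the 2x2 block is [[0,1],[0,0]]; block t starts at index sumn (take t s). *)
Definition jordan_mx (m : nat) (s : seq nat) : 'M[F]_m :=
  \matrix_(i < m, j < m)
    (if [exists t : 'I_(size s),
          [&& nth 0%N s t == 2%N, (i : nat) == sumn (take t s) & (j : nat) == i.+1]]
     then 1 else 0).

Definition is_jordan (m : nat) (J : 'M[F]_m) : Prop :=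
  exists s : seq nat,
    [/\ all (fun x => (x == 1%N) || (x == 2%N)) s, sumn s = m & J = jordan_mx m s].

Definition almost_jordan (m : nat) (D : 'M[F]_m) : Prop :=
  differential D /\
  exists p : 'S_m, is_jordan (invmx (perm_mx p) *m D *m perm_mx p).

Definition triangular (m : nat) (B : 'M[F]_m) : Prop :=
  (forall i j : 'I_m, (j < i)%N -> B i j = 0) /\ B \in unitmx.

(* A partition of {0..m-1} into consecutive (possibly empty) intervals I_0..I_{k-1}
   in increasing order is encoded by a nondecreasing block-index map blk. *)
Definition consec_partition (m k : nat) (blk : 'I_m -> 'I_k) : Prop :=
  forall a b : 'I_m, (a <= b)%N -> (blk a <= blk b)%N.

Definition block_diag (m k : nat) (blk : 'I_m -> 'I_k) (M : 'M[F]_m) : Prop :=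
  forall a b : 'I_m, (blk a : nat) != blk b -> M a b = 0.

Definition block_superdiag (m k : nat) (blk : 'I_m -> 'I_k) (M : 'M[F]_m) : Prop :=
  forall a b : 'I_m, (blk b : nat) != (blk a).+1 -> M a b = 0.
End Defs.

From HB Require Import structures.
From mathcomp Require Import all_boot all_order all_algebra all_fingroup.
From mathcomp Require Import ring zify.
Set Implicit Arguments. Unset Strict Implicit. Unset Printing Implicit Defensive.
Import Order.TTheory GRing.Theory Num.Theory.
Local Open Scope ring_scope.

(* Call (B, Bi) admissible when B *m Bi = 1, B is upper triangular and both are
   block diagonal; conjugating by such a pair preserves D^2 = 0 and block
   superdiagonality.  By induction on p we conjugate D until its first p columns
   are the 0/1 matrix of a list of disjoint index pairs (a, b) with b < p lying in
   the block after that of a; a permutation turns such a matrix into a Jordan one.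
   To treat column p, first subtract from it D a p times column b for each pair
   (a, b): this kills the entries at the heads a, while the entries at the tails b
   already vanish since D^2 = 0, and the compensating row operation adds
   multiples of row p, which is zero up to column p.  The remaining nonzero entries of column p
   sit at unused indices i < p; if there are any, a column operation with the
   largest of them, a, as pivot turns column p into e_a and adds the pair (a, p).
   Taking the largest index keeps the change of basis upper triangular. *)

Lemma mulmx1_invmx (R : comUnitRingType) n (A B : 'M[R]_n) :
  A *m B = 1%:M -> invmx A = B.
Proof.
move=> AB1; have [uA _] := mulmx1_unit AB1.
by rewrite -[invmx A]mulmx1 -AB1 mulmxA mulVmx // mul1mx.
Qed.

Lemma perm_conjE (R : comUnitRingType) n (P : 'S_n) (A : 'M[R]_n) i j :
  (invmx (perm_mx P^-1) *m A *m perm_mx P^-1) i j = A (P i) (P j).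
Proof.
have PV1 : perm_mx P^-1 *m perm_mx P = 1%:M :> 'M[R]_n.
  by rewrite -perm_mxM mulVg perm_mx1.
by rewrite (mulmx1_invmx PV1) -row_permE -col_permE !mxE.
Qed.

Lemma perm_of_seq n (L : seq 'I_n) : uniq L -> size L = n ->
  exists P : 'S_n, forall x0 i, P i = nth x0 L i.
Proof.
move=> uL sL.
have nth_inj : injective (fun i : 'I_n => nth i L i).
  move=> i j /= eq_ij; apply/val_inj/eqP.
  rewrite -(nth_uniq i _ _ uL) ?sL ?ltn_ord // eq_ij.
  by rewrite (set_nth_default i) ?sL.
exists (perm nth_inj) => x0 i.
by rewrite permE (set_nth_default x0) ?sL.
Qed.

Lemma jordan_nseqE (F : fieldType) m p (i j : 'I_m) :
  jordan_mx F m (nseq p 2 ++ nseq (m - p.*2) 1)%N i j =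
  if [exists t : 'I_p, (i == t.*2 :> nat) && (j == t.*2.+1 :> nat)] then 1 else 0.
Proof.
set s := (nseq p 2 ++ _)%N.
have sum_s t : (t < p)%N -> sumn (take t s) = t.*2.
  move=> tp; rewrite take_cat size_nseq tp (take_nseq _ (ltnW tp)).
  by rewrite sumn_nseq mul2n.
rewrite mxE; congr (if _ then _ else _); apply/existsP/existsP.
  case=> -[t ts] /= /and3P[s_t /eqP i_t /eqP j_i].
  have tp : (t < p)%N.
    move: s_t; rewrite nth_cat size_nseq; case: ltnP => // _.
    by rewrite nth_nseq; case: ifP.
  by exists (Ordinal tp); rewrite /= j_i i_t sum_s ?eqxx.
case=> -[t tp] /= /andP[/eqP i_t /eqP j_t].
have ts : (t < size s)%N by rewrite size_cat size_nseq ltn_addr.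
exists (Ordinal ts) => /=.
by rewrite nth_cat size_nseq tp nth_nseq tp sum_s // i_t j_t !eqxx.
Qed.

Section ElementaryMatrix.
Variables (F : fieldType) (n : nat).
Implicit Types (X : 'M[F]_n) (y : 'cV[F]_n).

Definition upper_trig X := forall i j : 'I_n, (j < i)%N -> X i j = 0.

Lemma upper_trig1 : upper_trig 1%:M.
Proof. by move=> i j ji; rewrite mxE; case: eqP => // e; rewrite e ltnn in ji. Qed.

Lemma upper_trigM X1 X2 : upper_trig X1 -> upper_trig X2 -> upper_trig (X1 *m X2).
Proof.
move=> U1 U2 i j ji; rewrite mxE big1 // => l _.
case: (ltnP l i) => li; first by rewrite U1 ?mul0r.
by rewrite U2 ?mulr0 // (leq_trans ji li).
Qed.

Definition elem_mx y (p : 'I_n) : 'M[F]_n := 1%:M + y *m delta_mx 0 p.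

Lemma elem_mxE y p i j : elem_mx y p i j = (i == j)%:R + y i 0 * (j == p)%:R.
Proof. by rewrite !mxE big_ord1 mxE eqxx. Qed.

Lemma mulmx_elemE X y p i j :
  (X *m elem_mx y p) i j = X i j + (X *m y) i 0 * (j == p)%:R.
Proof. by rewrite mulmxDr mulmx1 mxE mulmxA mxE big_ord1 [delta_mx _ _ _ _]mxE. Qed.

Lemma elem_mulmxE y p X i j : (elem_mx y p *m X) i j = X i j + y i 0 * X p j.
Proof. by rewrite mulmxDl mul1mx mxE -mulmxA -rowE mxE big_ord1 mxE. Qed.

Lemma conj_elemE y' y p X i j :
  (elem_mx y' p *m X *m elem_mx y p) i j =
  X i j + (X *m y) i 0 * (j == p)%:R +
  y' i 0 * (X p j + (X *m y) p 0 * (j == p)%:R).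
Proof. by rewrite -mulmxA elem_mulmxE !mulmx_elemE. Qed.

Lemma conj_elem_lowerE y' y (p : 'I_n) X i (j : 'I_n) :
  (forall l : 'I_n, (l <= p)%N -> X p l = 0) ->
  (forall b, y b 0 != 0 -> (b < p)%N) -> (j <= p)%N ->
  (elem_mx y' p *m X *m elem_mx y p) i j = X i j + (X *m y) i 0 * (j == p)%:R.
Proof.
move=> Xp0 y_supp jp; rewrite conj_elemE Xp0 // add0r.
have -> : (X *m y) p 0 = 0.
  rewrite mxE big1 // => b _.
  by case: (eqVneq (y b 0) 0) => [->|/y_supp/ltnW/Xp0->]; rewrite ?mulr0 ?mul0r.
by rewrite mul0r mulr0 addr0.
Qed.

Definition elem_inv y p := elem_mx (- (1 + y p 0)^-1 *: y) p.

Lemma elem_mxK y p : 1 + y p 0 != 0 -> elem_mx y p *m elem_inv y p = 1%:M.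
Proof.
move=> unit_yp; apply/matrixP => i j; rewrite elem_mulmxE !elem_mxE !mxE.
by case: (eqVneq j p) => [->|_]; field.
Qed.

Lemma upper_trig_elem y (p : 'I_n) : (forall i, y i 0 != 0 -> (i <= p)%N) ->
  upper_trig (elem_mx y p).
Proof.
move=> y_supp i j ji; rewrite elem_mxE.
have -> : (i == j) = false by apply: contraTF ji => /eqP->; rewrite ltnn.
case: (eqVneq j p) => [jp|_]; last by rewrite mulr0n mulr0 addr0.
have -> : y i 0 = 0 by apply: contraTeq ji => /y_supp; rewrite -jp leqNgt.
by rewrite mulr0n mul0r addr0.
Qed.

End ElementaryMatrix.

Section PairMatrix.
Variables (F : fieldType) (m : nat).
Implicit Types (ps : seq ('I_m * 'I_m)) (x y : 'I_m * 'I_m).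

Definition pair_mx ps : 'M[F]_m := \matrix_(i, j) ((i, j) \in ps)%:R.

Definition endpoints ps : seq 'I_m := flatten [seq [:: x.1; x.2] | x <- ps].

Lemma pair_mxE ps i j : pair_mx ps i j = ((i, j) \in ps)%:R.
Proof. by rewrite mxE. Qed.

Lemma endpoints_rcons ps x : endpoints (rcons ps x) = endpoints ps ++ [:: x.1; x.2].
Proof. by rewrite /endpoints map_rcons flatten_rcons. Qed.

Lemma size_endpoints ps : size (endpoints ps) = (size ps).*2.
Proof. by elim: ps => //= x ps IH; rewrite -/(endpoints ps) IH. Qed.

Lemma nth_endpoints ps i0 t : (t < size ps)%N ->
  nth i0 (endpoints ps) t.*2 = (nth (i0, i0) ps t).1 /\
  nth i0 (endpoints ps) t.*2.+1 = (nth (i0, i0) ps t).2.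
Proof. by elim: ps t => //= x ps IH [|t] //= /IH. Qed.

Lemma endpointsP ps i :
  reflect (exists2 x, x \in ps & (i == x.1) || (i == x.2)) (i \in endpoints ps).
Proof.
apply: (iffP flattenP) => [[l /mapP[x x_ps ->]]|[x x_ps i_x]].
  by rewrite !inE => i_x; exists x.
by exists [:: x.1; x.2]; [apply: map_f | rewrite !inE].
Qed.

Lemma mem_endpoints ps x : x \in ps ->
  (x.1 \in endpoints ps) && (x.2 \in endpoints ps).
Proof.
by move=> x_ps; apply/andP; split; apply/endpointsP; exists x; rewrite ?eqxx ?orbT.
Qed.

Lemma uniq_endpoints_pairs ps x y : uniq (endpoints ps) -> x \in ps -> y \in ps ->
  [/\ x.1 = y.1 -> x = y, x.2 = y.2 -> x = y & x.2 != y.1].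
Proof.
elim: ps => //= z ps IH.
rewrite -/(endpoints ps) inE negb_or => /and3P[/andP[z12 z1] z2 u_ps].
have fresh w : w \in ps ->
    [&& z.1 != w.1, z.1 != w.2, z.2 != w.1 & z.2 != w.2].
  move=> /mem_endpoints/andP[w1 w2].
  by apply/and4P; split; [move: z1|move: z1|move: z2|move: z2];
    apply: contraNneq => ->.
rewrite !inE => /orP[/eqP->|x_ps] /orP[/eqP->|y_ps].
- by split=> //; rewrite eq_sym.
- have /and4P[/eqP n11 _ n21 /eqP n22] := fresh _ y_ps.
  by split=> // [/n11|/n22].
- have /and4P[/eqP n11 n12 _ /eqP n22] := fresh _ x_ps.
  by split=> [/esym/n11|/esym/n22|] //; rewrite eq_sym.
- exact: IH.
Qed.

Section Matching.
Variable ps : seq ('I_m * 'I_m).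
Hypothesis uniq_ps : uniq (endpoints ps).

Lemma pair_mx_col a b i : (a, b) \in ps -> pair_mx ps i b = (i == a)%:R.
Proof.
move=> ab; rewrite pair_mxE; case: (eqVneq i a) => [->|ia]; first by rewrite ab.
case ib: ((i, b) \in ps) => //.
by have [_ /(_ erefl) [] /eqP] := uniq_endpoints_pairs uniq_ps ib ab; rewrite (negPf ia).
Qed.

Lemma pair_mx_row a b j : (a, b) \in ps -> pair_mx ps a j = (j == b)%:R.
Proof.
move=> ab; rewrite pair_mxE; case: (eqVneq j b) => [->|jb]; first by rewrite ab.
case aj: ((a, j) \in ps) => //.
by have [/(_ erefl) [] /eqP] := uniq_endpoints_pairs uniq_ps aj ab; rewrite (negPf jb).
Qed.

Lemma pair_mx_sqr : pair_mx ps *m pair_mx ps = 0.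
Proof.
apply/matrixP => i j; rewrite !mxE big1 // => l _.
rewrite !pair_mxE; case il: ((i, l) \in ps); last by rewrite mul0r.
case lj: ((l, j) \in ps); last by rewrite mulr0.
by have [_ _ /=] := uniq_endpoints_pairs uniq_ps il lj; rewrite eqxx.
Qed.

Lemma pair_mx_mul_head a b (n : nat) (X : 'M[F]_(m, n)) j :
  (a, b) \in ps -> (pair_mx ps *m X) a j = X b j.
Proof.
move=> ab; rewrite mxE (bigD1 b) //= (pair_mx_row _ ab) eqxx mul1r big1 ?addr0 //.
by move=> l /negPf lb; rewrite (pair_mx_row _ ab) lb mul0r.
Qed.

End Matching.

Lemma pair_mx_mul_nohead ps i (n : nat) (X : 'M[F]_(m, n)) j :
  (forall b, (i, b) \notin ps) -> (pair_mx ps *m X) i j = 0.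
Proof.
move=> nohead; rewrite mxE big1 // => b _.
by rewrite pair_mxE (negPf (nohead b)) mul0r.
Qed.

Lemma pair_mx_col_eq0 ps i b : b \notin endpoints ps -> pair_mx ps i b = 0.
Proof.
rewrite pair_mxE; case ib: ((i, b) \in ps) => //.
by have /andP[_ ->] := mem_endpoints ib.
Qed.

Lemma pair_mx_row_eq0 ps a j : a \notin endpoints ps -> pair_mx ps a j = 0.
Proof.
rewrite pair_mxE; case aj: ((a, j) \in ps) => //.
by have /andP[-> _] := mem_endpoints aj.
Qed.

Lemma pair_mx_mul_unused ps n (X : 'M[F]_(m, n)) :
  (forall b j, X b j != 0 -> b \notin endpoints ps) -> pair_mx ps *m X = 0.
Proof.
move=> X_supp; apply/matrixP => i j; rewrite !mxE big1 // => b _.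
case: (eqVneq (X b j) 0) => [->|/X_supp/pair_mx_col_eq0->]; by rewrite ?mulr0 ?mul0r.
Qed.

Lemma mem_nth_pair ps s i0 (i j : nat) :
  uniq (endpoints ps ++ s) ->
  (i < size (endpoints ps ++ s))%N -> (j < size (endpoints ps ++ s))%N ->
  ((nth i0 (endpoints ps ++ s) i, nth i0 (endpoints ps ++ s) j) \in ps) =
  [exists t : 'I_(size ps), (i == t.*2) && (j == t.*2.+1)].
Proof.
set L := endpoints ps ++ s => uL iL jL.
have nthL t : (t < size ps)%N ->
    nth i0 L t.*2 = (nth (i0, i0) ps t).1 /\ nth i0 L t.*2.+1 = (nth (i0, i0) ps t).2.
  move=> tp; rewrite !nth_cat size_endpoints ltn_double ltn_Sdouble tp.
  exact: nth_endpoints.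
have tL t : (t < size ps)%N -> (t.*2 < size L)%N /\ (t.*2.+1 < size L)%N.
  by move=> tp; rewrite size_cat size_endpoints !ltn_addr ?ltn_double ?ltn_Sdouble.
apply/idP/existsP => [/(nthP (i0, i0))[t tp pt]|[[t tp] /andP[/eqP-> /eqP->]]].
  have [[e1 e2] [t1 t2]] := (nthL t tp, tL t tp).
  rewrite pt in e1 e2; exists (Ordinal tp) => /=.
  by rewrite -(nth_uniq i0 iL t1 uL) -(nth_uniq i0 jL t2 uL) e1 e2 !eqxx.
have [e1 e2] := nthL t tp.
by rewrite e1 e2 -surjective_pairing mem_nth.
Qed.

Lemma almost_jordan_pair_mx ps : uniq (endpoints ps) -> almost_jordan (pair_mx ps).
Proof.
move=> u_ps; split; first exact: pair_mx_sqr.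
set L := endpoints ps ++ [seq i <- enum 'I_m | i \notin endpoints ps].
have uL : uniq L.
  rewrite cat_uniq u_ps filter_uniq ?enum_uniq // andbT.
  by apply/hasPn => x; rewrite mem_filter => /andP[].
have sL : size L = m.
  rewrite -(card_uniqP uL) -[RHS]card_ord; apply: eq_card => x.
  by rewrite mem_cat mem_filter mem_enum andbT orbN.
have [P PE] := perm_of_seq uL sL.
have p2m : ((size ps).*2 <= m)%N.
  by rewrite -[X in (_ <= X)%N]sL size_cat size_endpoints leq_addr.
exists P^-1%g, (nseq (size ps) 2 ++ nseq (m - (size ps).*2) 1)%N; split.
- by rewrite all_cat !all_nseq /= !orbT.
- by rewrite sumn_cat !sumn_nseq; lia.
apply/matrixP => i j; rewrite perm_conjE jordan_nseqE !(PE i) pair_mxE.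
by rewrite mem_nth_pair ?sL //; case: [exists _, _].
Qed.


End PairMatrix.

Section Normalization.
Variables (F : fieldType) (m k : nat) (blk : 'I_m -> 'I_k).
Hypothesis blk_mono : consec_partition blk.
Implicit Types (A M : 'M[F]_m) (ps : seq ('I_m * 'I_m)) (y : 'cV[F]_m).

Lemma block_diag1 : block_diag blk (1%:M : 'M[F]_m).
Proof.
by move=> a b ab; rewrite mxE; case: eqP => // eq_ab; rewrite eq_ab eqxx in ab.
Qed.

Lemma block_diagM A M : block_diag blk A -> block_diag blk M ->
  block_diag blk (A *m M).
Proof.
move=> dA dM a b ab; rewrite mxE big1 // => l _.
case: (eqVneq (blk a : nat) (blk l)) => al; last by rewrite dA ?mul0r.
by rewrite dM ?mulr0 // -al.
Qed.

Lemma block_superdiag_mull A M : block_diag blk A -> block_superdiag blk M ->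
  block_superdiag blk (A *m M).
Proof.
move=> dA sM a b ab; rewrite mxE big1 // => l _.
case: (eqVneq (blk a : nat) (blk l)) => al; last by rewrite dA ?mul0r.
by rewrite sM ?mulr0 // -al.
Qed.

Lemma block_superdiag_mulr M A : block_superdiag blk M -> block_diag blk A ->
  block_superdiag blk (M *m A).
Proof.
move=> sM dA a b ab; rewrite mxE big1 // => l _.
case: (eqVneq (blk l : nat) (blk a).+1) => al; last by rewrite sM ?mul0r.
by rewrite dA ?mulr0 // al eq_sym.
Qed.

Lemma block_superdiag_blk M i j : block_superdiag blk M -> M i j != 0 ->
  (blk j : nat) = (blk i).+1.
Proof. by move=> sM; apply: contraNeq => /sM ->. Qed.

Lemma block_superdiag_lt M i j :
  block_superdiag blk M -> M i j != 0 -> (i < j)%N.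
Proof.
move=> sM /(block_superdiag_blk sM) ji; rewrite ltnNge.
by apply: contraL (leqnn (blk j)) => /blk_mono; rewrite ji -ltnNge.
Qed.

Lemma block_diag_elem (y : 'cV[F]_m) p :
  (forall i, y i 0 != 0 -> blk i = blk p) -> block_diag blk (elem_mx y p).
Proof.
move=> y_supp a b ab; rewrite elem_mxE.
have -> : (a == b) = false by apply: contraNF ab => /eqP->.
case: (eqVneq b p) => [bp|_]; last by rewrite mulr0n mulr0 addr0.
have -> : y a 0 = 0 by apply: contraNeq ab => /y_supp ->; rewrite bp.
by rewrite mulr0n mul0r addr0.
Qed.

Definition admissible (B Bi : 'M[F]_m) :=
  [/\ B *m Bi = 1%:M, upper_trig B, block_diag blk B & block_diag blk Bi].

Lemma admissible1 : admissible 1%:M 1%:M.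
Proof. by split; [rewrite mulmx1 | exact: upper_trig1 | exact: block_diag1 ..]. Qed.

Lemma admissibleM B Bi C Ci : admissible B Bi -> admissible C Ci ->
  admissible (B *m C) (Ci *m Bi).
Proof.
case=> BBi uB dB dBi [CCi uC dC dCi]; split.
- by rewrite mulmxA -(mulmxA B) CCi mulmx1.
- exact: upper_trigM.
- exact: block_diagM.
- exact: block_diagM.
Qed.

Lemma admissible_elem (y : 'cV[F]_m) p : 1 + y p 0 != 0 ->
  (forall i, y i 0 != 0 -> (i <= p)%N /\ blk i = blk p) ->
  admissible (elem_mx y p) (elem_inv y p).
Proof.
move=> unit_yp y_supp; split.
- exact: elem_mxK.
- by apply: upper_trig_elem => i /y_supp[].
- by apply: block_diag_elem => i /y_supp[].
apply: block_diag_elem => i; rewrite mxE mulf_eq0 negb_or => /andP[_].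
by case/y_supp.
Qed.

Definition pairing n ps := uniq (endpoints ps) &&
  all (fun x : 'I_m * 'I_m =>
    [&& (x.1 < n)%N, (x.2 < n)%N & (blk x.2 : nat) == (blk x.1).+1]) ps.

Definition normal_upto n ps M :=
  pairing n ps /\ forall i (j : 'I_m), (j < n)%N -> M i j = pair_mx F ps i j.

Definition free_column ps (p : 'I_m) M := forall i, M i p != 0 ->
  [/\ i \notin endpoints ps, (i < p)%N & (blk p : nat) = (blk i).+1].

Lemma pairing_mem n ps x : pairing n ps -> x \in ps ->
  [/\ (x.1 < n)%N, (x.2 < n)%N & (blk x.2 : nat) = (blk x.1).+1].
Proof. by case/andP=> _ /allP ps_n /ps_n /and3P[? ? /eqP]. Qed.

Lemma pairing_endpoints n ps i : pairing n ps -> i \in endpoints ps -> (i < n)%N.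
Proof. by move=> pn /endpointsP[x /(pairing_mem pn)[? ?] _ /orP[]/eqP->]. Qed.

Lemma pairing_rcons ps (a p : 'I_m) : pairing p ps ->
  a \notin endpoints ps -> (a < p)%N -> (blk p : nat) = (blk a).+1 ->
  pairing p.+1 (rcons ps (a, p)).
Proof.
move=> /[dup] pp /andP[u_ps /allP ps_p] aE ap pa; apply/andP; split.
  rewrite endpoints_rcons cat_uniq u_ps /= (negPf aE) orbF inE andbT.
  apply/andP; split; last by apply: contraTneq ap => ->; rewrite ltnn.
  by apply: contraT => /negbNE/(pairing_endpoints pp); rewrite ltnn.
rewrite all_rcons /= ltnS (ltnW ap) ltnSn pa eqxx /=.
by apply/allP => x /ps_p /and3P[x1 x2 ->]; rewrite !ltnS (ltnW x1) (ltnW x2).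
Qed.

Lemma pairingS n ps : pairing n ps -> pairing n.+1 ps.
Proof.
case/andP=> u_ps /allP ps_n; apply/andP; split=> //; apply/allP => x /ps_n.
by case/and3P=> x1 x2 ->; rewrite !ltnS (ltnW x1) (ltnW x2).
Qed.

Lemma block_superdiag_pair_mx n ps : pairing n ps ->
  block_superdiag blk (pair_mx F ps).
Proof.
move=> pn a b; apply: contraNeq; rewrite pair_mxE.
case ab: ((a, b) \in ps); last by rewrite eqxx.
by have [_ _ ->] := pairing_mem pn ab.
Qed.

Lemma normal_mulmx n ps M y : normal_upto n ps M ->
  (forall b, y b 0 != 0 -> (b < n)%N) -> M *m y = pair_mx F ps *m y.
Proof.
move=> [_ Mps] y_supp; apply/matrixP => i j.
rewrite ord1 !mxE; apply: eq_bigr => b _.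
by case: (eqVneq (y b 0) 0) => [->|/y_supp/Mps->]; rewrite ?mulr0.
Qed.

Lemma normal_uptoS (p : 'I_m) ps ps' M :
  normal_upto p ps M -> pairing p.+1 ps' ->
  (forall i (j : 'I_m), (j < p)%N -> pair_mx F ps' i j = pair_mx F ps i j) ->
  (forall i, M i p = pair_mx F ps' i p) -> normal_upto p.+1 ps' M.
Proof.
move=> [_ Mps] pp' ps'_ps Mp; split=> // i j; rewrite ltnS leq_eqVlt.
case/orP=> [/eqP jp|jp]; last by rewrite Mps // ps'_ps.
by rewrite (_ : j = p) //; apply: val_inj.
Qed.

Lemma column_tail_eq0 (p : 'I_m) ps M a b :
  block_superdiag blk M -> M *m M = 0 ->
  normal_upto p ps M -> (a, b) \in ps -> M b p = 0.
Proof.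
move=> sM MM [pp Mps] ab; have /andP[u_ps _] := pp.
(* Row a of M is e_b on the columns < p and M l p = 0 for l >= p. *)
have : (M *m M) a p = 0 by rewrite MM mxE.
rewrite mxE (bigD1 b) //= big1 => [|l /negPf lb].
  have [_ bp _] := pairing_mem pp ab.
  by rewrite addr0 Mps // (pair_mx_row F u_ps _ ab) eqxx mul1r.
case: (ltnP l p) => lp; first by rewrite Mps // (pair_mx_row F u_ps _ ab) lb mul0r.
case: (eqVneq (M l p) 0) => [->|/(block_superdiag_lt sM)]; first by rewrite mulr0.
by rewrite ltnNge lp.
Qed.

Definition clearing_vector ps (p : 'I_m) M : 'cV[F]_m :=
  - ((pair_mx F ps)^T *m col p M).

Lemma clearing_vector_tail ps p M a b : uniq (endpoints ps) -> (a, b) \in ps ->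
  clearing_vector ps p M b 0 = - M a p.
Proof.
move=> u_ps ab; rewrite !mxE (bigD1 a) //= big1 ?addr0 => [|a' /negPf a'a].
  by rewrite !mxE ab mul1r.
by rewrite !mxE -pair_mxE (pair_mx_col F u_ps _ ab) a'a mul0r.
Qed.

Lemma clearing_vector_supp ps (p : 'I_m) M b : block_superdiag blk M ->
  pairing p ps -> clearing_vector ps p M b 0 != 0 ->
  (b < p)%N /\ blk b = blk p.
Proof.
move=> sM pp; rewrite mxE oppr_eq0 mxE => yb.
have /existsP[a] : [exists a, (pair_mx F ps)^T b a * col p M a 0 != 0].
  apply: contraTT yb => /existsPn all0.
  by rewrite negbK big1 // => a _; apply/eqP/negbNE.
rewrite !mxE mulf_eq0 negb_or => /andP[ab Map].
have {}ab : (a, b) \in ps by apply: contraNT ab => /negPf->.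
have [_ bp ba] := pairing_mem pp ab; split=> //.
by apply: val_inj; rewrite /= ba (block_superdiag_blk sM Map).
Qed.

Lemma clear_column (p : 'I_m) ps M : block_superdiag blk M -> M *m M = 0 ->
  normal_upto p ps M -> exists G Gi,
  [/\ admissible G Gi, normal_upto p ps (Gi *m M *m G)
    & free_column ps p (Gi *m M *m G)].
Proof.
move=> sM MM Np; have [pp Mps] := Np; have /andP[u_ps _] := pp.
set y := clearing_vector ps p M.
have y_supp b : y b 0 != 0 -> (b < p)%N /\ blk b = blk p.
  exact: clearing_vector_supp.
have row_p (l : 'I_m) : (l <= p)%N -> M p l = 0.
  by move=> lp; apply: contraTeq lp => /(block_superdiag_lt sM); rewrite ltnNge.
have conjE i (j : 'I_m) : (j <= p)%N -> (elem_inv y p *m M *m elem_mx y p) i j =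
    M i j + (pair_mx F ps *m y) i 0 * (j == p)%:R.
  move=> jp; rewrite conj_elem_lowerE // => [|b /y_supp[] //].
  by rewrite (normal_mulmx Np) // => b /y_supp[].
exists (elem_mx y p), (elem_inv y p); split.
- apply: admissible_elem => [|i /y_supp[/ltnW] //].
  have -> : y p 0 = 0 by apply/eqP; apply: contraT => /y_supp[]; rewrite ltnn.
  by rewrite addr0 oner_neq0.
- split=> // i j jp; rewrite conjE ?(ltnW jp) // Mps //.
  by have -> : (j == p) = false := ltn_eqF jp; rewrite mulr0n mulr0 addr0.
move=> i; rewrite conjE // eqxx mulr1.
case: (pickP (fun b => (i, b) \in ps)) => [b ib|nohead].
  rewrite (pair_mx_mul_head u_ps _ _ ib) (clearing_vector_tail _ _ u_ps ib).
  by rewrite subrr eqxx.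
rewrite pair_mx_mul_nohead ?addr0 => [Mip|b]; last by rewrite nohead.
split; [|exact: block_superdiag_lt sM Mip|exact: block_superdiag_blk sM Mip].
apply/endpointsP => -[x xps /orP[]/eqP ix].
  by move: (nohead x.2); rewrite ix -surjective_pairing xps.
move: Mip; rewrite ix (column_tail_eq0 sM MM Np (a := x.1)) ?eqxx //.
by rewrite -surjective_pairing.
Qed.

Lemma pair_free_column (p : 'I_m) ps M :
  normal_upto p ps M -> free_column ps p M ->
  exists G Gi ps', admissible G Gi /\ normal_upto p.+1 ps' (Gi *m M *m G).
Proof.
move=> Np free; have [pp Mps] := Np; have /andP[u_ps _] := pp.
have pE : p \notin endpoints ps.
  by apply: contraT => /negbNE/(pairing_endpoints pp); rewrite ltnn.
case: (pickP (fun i => M i p != 0)) => [i0 Mi0|zero]; last first.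
  exists 1%:M, 1%:M, ps; split; first exact: admissible1.
  rewrite mul1mx mulmx1; apply: (normal_uptoS Np (pairingS pp)) => // i.
  by rewrite pair_mx_col_eq0 //; apply/eqP/negbFE/zero.
have [a Map a_max] := @arg_maxnP _ i0 (fun i => M i p != 0) val Mi0.
have [aE ap pa] := free _ Map.
pose y : 'cV[F]_m := \col_i (M i p - (i == a)%:R).
have y_supp i : y i 0 != 0 -> i = a \/ M i p != 0.
  by rewrite mxE; case: (eqVneq i a) => [|_]; [left | rewrite subr0; right].
have My : M *m y = 0.
  rewrite (normal_mulmx Np) => [|b /y_supp[->|/free[]] //].
  by apply: pair_mx_mul_unused => b j; rewrite ord1 => /y_supp[->|/free[]].
have ya : 1 + y a 0 = M a p by rewrite mxE eqxx addrC subrK.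
have conjE i j : (elem_inv y a *m M *m elem_mx y a) i j =
    M i j - (1 + y a 0)^-1 * y i 0 * M a j.
  by rewrite conj_elemE My !mxE !mul0r !addr0 mulNr mulNr.
exists (elem_mx y a), (elem_inv y a), (rcons ps (a, p)); split.
  apply: admissible_elem => [|i /y_supp[->|/[dup] Mip /free[_ _ pi]]];
    rewrite ?ya //.
  by split; [apply: a_max | apply: val_inj; apply: succn_inj; rewrite -pi].
have Np' : normal_upto p ps (elem_inv y a *m M *m elem_mx y a).
  split=> // i j jp; rewrite conjE (Mps a) // pair_mx_row_eq0 // mulr0 subr0.
  exact: Mps.
apply: normal_uptoS Np' (pairing_rcons pp aE ap pa) _ _ => i.
  move=> j jp; rewrite !pair_mxE mem_rcons inE xpair_eqE.
  by have -> : (j == p) = false := ltn_eqF jp; rewrite andbF.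
rewrite conjE ya !pair_mxE mem_rcons inE xpair_eqE eqxx andbT.
have -> : (i, p) \in ps = false by apply: contraNF pE => /mem_endpoints/andP[].
by rewrite orbF mxE; case: (eqVneq i a) => [->|_]; field.
Qed.

Lemma normal_upto_step (p : 'I_m) ps M : block_superdiag blk M -> M *m M = 0 ->
  normal_upto p ps M ->
  exists G Gi ps', admissible G Gi /\ normal_upto p.+1 ps' (Gi *m M *m G).
Proof.
move=> sM MM Np; have [G [Gi [admG Np' free]]] := clear_column sM MM Np.
have [H [Hi [ps' [admH Np'']]]] := pair_free_column Np' free.
exists (G *m H), (Hi *m Gi), ps'; split; first exact: admissibleM.
by rewrite !mulmxA in Np'' *.
Qed.

Lemma normal_form D : block_superdiag blk D -> D *m D = 0 ->
  forall n, (n <= m)%N ->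
  exists B Bi ps, admissible B Bi /\ normal_upto n ps (Bi *m D *m B).
Proof.
move=> sD DD; elim=> [_|n IH nm].
  by exists 1%:M, 1%:M, [::]; split; [exact: admissible1 | split].
have [B [Bi [ps [admB Nn]]]] := IH (ltnW nm); have [BBi _ dB dBi] := admB.
have sM : block_superdiag blk (Bi *m D *m B).
  by apply: block_superdiag_mulr => //; apply: block_superdiag_mull.
have MM : (Bi *m D *m B) *m (Bi *m D *m B) = 0.
  have -> : (Bi *m D *m B) *m (Bi *m D *m B) = Bi *m (D *m (B *m Bi) *m D) *m B.
    by rewrite !mulmxA.
  by rewrite BBi mulmx1 DD mulmx0 mul0mx.
have [G [Gi [ps' [admG Nn']]]] := normal_upto_step (p := Ordinal nm) sM MM Nn.
exists (B *m G), (Gi *m Bi), ps'; split; first exact: admissibleM.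
by rewrite !mulmxA in Nn' *.
Qed.

End Normalization.

Theorem theorem1p4 (F : fieldType) (m k : nat) (blk : 'I_m -> 'I_k)
  (D : 'M[F]_m) :
  consec_partition blk ->
  differential D ->
  block_superdiag blk D ->
  exists (Dj B : 'M[F]_m),
    [/\ almost_jordan Dj, block_superdiag blk Dj,
        triangular B, block_diag blk B &
        D = B *m Dj *m invmx B].
Proof.
move=> blk_mono DD sD.
have [B [Bi [ps [[BBi uB dB _] [pp Mps]]]]] := normal_form blk_mono sD DD (leqnn m).
have DjE : Bi *m D *m B = pair_mx F ps by apply/matrixP => i j; apply: Mps.
exists (pair_mx F ps), B; split.
- by apply: almost_jordan_pair_mx; case/andP: pp.
- exact: block_superdiag_pair_mx pp.
- by split=> //; case: (mulmx1_unit BBi).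
- exact: dB.
by rewrite -DjE (mulmx1_invmx BBi) !mulmxA BBi mul1mx -mulmxA BBi mulmx1.
Qed.
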